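(* Let $U$ be a unicyclic graph with an edge $\ell u\in E(U)$ such that $\deg(\ell)=1$ and $u\notin V(\operatorname{Cycles}(U))$. (i) If $v\in V(\operatorname{Cycles}(U))$, then there exists a u-switch $\tau$ over $U$ such that $\ell v\in E(\tau(U))$. (ii) If $v\notin V(\operatorname{Cycles}(U))$, $v\neq u$ and $\deg(v)\ge2$, then there exists a u-switch $\tau$ over $U$ such that $\ell v\in E(\tau(U))$.
   Context: Graphs are finite, simple, undirected, labeled. A unicyclic graph is a connected graph with exactly one cycle. For vertices $a,b,c,d$, $A=\binom{a\ b}{c\ d}$ is interchangeable in $G$ if $ab,cd\in E(G)$, $\{a,b\}\cap\{c,d\}=\varnothing$, $ac,bd\notin E(G)$; the 2-switch $\tau_A$ sends $G$ to $G-ab-cd+ac+bd$ if $A$ is interchangeable and to $G$ otherwise (trivial). A nontrivial 2-switch $\tau$ over a unicyclic $U$ is a u-switch if $\tau(U)$ is unicyclic. $\operatorname{Cycles}(G)$ is the subgraph induced by vertices lying on some cycle of $G$. *)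

From mathcomp Require Import all_boot.
Set Implicit Arguments. Unset Strict Implicit. Unset Printing Implicit Defensive.

Section Graphs.
Variable T : finType.

Definition simple_graph (e : rel T) := symmetric e /\ irreflexive e.

Definition deg (e : rel T) (x : T) : nat := #|[set y | e x y]|.

Definition connected_graph (e : rel T) := forall x y : T, connect e x y.

Definition is_cycle (e : rel T) (c : seq T) :=
  [&& uniq c, 3 <= size c & cycle e c].

Definition cycle_edges (c : seq T) : {set {set T}} :=
  [set [set x; next c x] | x in c].

(* exactly one cycle (cycles as subgraphs, i.e. determined by their edges) *)
Definition unicyclic (e : rel T) :=
  [/\ connected_graph e,
      exists c, is_cycle e c &
      forall c1 c2, is_cycle e c1 -> is_cycle e c2 ->
        cycle_edges c1 = cycle_edges c2].

(* vertices of Cycles(G): vertices lying on some cycle *)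
Definition on_cycle (e : rel T) (x : T) := exists c, is_cycle e c /\ x \in c.

Definition edge_is (x y a b : T) : bool :=
  ((x == a) && (y == b)) || ((x == b) && (y == a)).

Definition interchangeable (e : rel T) (a b c d : T) : bool :=
  [&& e a b, e c d, a != c, a != d, b != c, b != d, ~~ e a c & ~~ e b d].

Definition two_switch (e : rel T) (a b c d : T) : rel T :=
  if interchangeable e a b c d then
    fun x y => (e x y && ~~ edge_is x y a b && ~~ edge_is x y c d)
               || edge_is x y a c || edge_is x y b d
  else e.

Definition u_switch (e : rel T) (a b c d : T) :=
  interchangeable e a b c d /\ unicyclic (two_switch e a b c d).

End Graphs.

From mathcomp Require Import all_boot.
Set Implicit Arguments. Unset Strict Implicit. Unset Printing Implicit Defensive.

(* The u-switch (l u ; v w) trades the edges lu, vw for lv, uw, so everything rests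
   on the choice of w.  If v lies on the cycle C, w is a neighbour of v on C that is
   not adjacent to u (if u saw both neighbours of v on C, u would lie on a 4-cycle):
   the switch opens C at vw, and uw closes a new cycle through the old path of C from
   v to w.  A cycle of the new graph avoiding uw would be a cycle of U missing vw, and
   two new cycles through uw with different edge sets would combine into such a
   cycle, so the new cycle is unique.  If v is off the cycle, w is a neighbour of v
   other than the vertex x preceding v on a path from u to v avoiding l; then vw is a
   bridge separating w from u, so uw lies on no cycle and C survives unchanged. *)

Section Graphs.
Variable T : finType.
Implicit Types (r s : rel T) (c : seq T) (a b p q x y z : T).

Definition del_edge r x y : rel T := fun a b => r a b && ~~ edge_is a b x y.

Definition induced r (A : {pred T}) : rel T := fun a b => [&& a \in A, b \in A & r a b].

Lemma eq_set2 a b x y : [set a; b] = [set x; y] ->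
  (a = x /\ b = y) \/ (a = y /\ b = x).
Proof.
move=> E.
have /set2P ha : a \in [set x; y] by rewrite -E set21.
have /set2P hb : b \in [set x; y] by rewrite -E set22.
have /set2P hx : x \in [set a; b] by rewrite E set21.
have /set2P hy : y \in [set a; b] by rewrite E set22.
by case: ha hb hx hy => ? [] ? [] ? [] ?; subst; auto.
Qed.

Lemma edge_isE a b x y : edge_is a b x y = ([set a; b] == [set x; y]).
Proof.
apply/idP/eqP => [/orP[]/andP[/eqP-> /eqP->] //|]; first exact: setUC.
by case/eq_set2=> [][-> ->]; rewrite /edge_is !eqxx ?orbT.
Qed.

Lemma edge_isNl a b x y : a != x -> b != x -> edge_is a b x y = false.
Proof. by move=> ax bx; rewrite /edge_is (negbTE ax) (negbTE bx) andbF. Qed.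

Lemma edge_is_rel r a b x y : symmetric r -> edge_is a b x y -> r a b = r x y.
Proof. by move=> sr /orP[]/andP[/eqP-> /eqP->]. Qed.

Lemma del_edge_sym r x y : symmetric r -> symmetric (del_edge r x y).
Proof. by move=> sr a b; rewrite /del_edge sr !edge_isE setUC. Qed.

Lemma connect_del_edge r x y : subrel (connect (del_edge r x y)) (connect r).
Proof. by apply: connect_sub => a b /andP[rab _]; apply: connect1. Qed.

Lemma connect_set2 s a b x y : symmetric s -> [set a; b] = [set x; y] ->
  connect s x y -> connect s a b.
Proof. by move=> ss /eq_set2[][-> ->] //; rewrite sym_connect_sym. Qed.

Lemma connect_exit r (P : pred T) x y : connect r x y -> P x -> ~~ P y ->
  exists a b, [/\ r a b, P a & ~~ P b].
Proof.
move=> /connectP[t + ->]; elim: t x => [|z t IH] x /=; first by move=> _ ->.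
case/andP=> rxz tz Px; case Pz: (P z); first exact: IH.
by exists x, z; rewrite Pz.
Qed.

Lemma connect_induced_mem r (A : {pred T}) x y :
  x \in A -> connect (induced r A) x y -> y \in A.
Proof.
move=> xA /connectP[t + ->]; elim: t x xA => //= z t IH x _.
by case/andP=> /and3P[_ zA _]; apply: IH.
Qed.

Lemma connect_avoid_leaf r l u y : connected_graph r ->
  (forall z, r l z -> z = u) -> u != l -> y != l ->
  connect (induced r (predC1 l)) u y.
Proof.
move=> cr leaf ul yl; apply/negPn/negP => Ny.
pose P z := connect (induced r (predC1 l)) u z || (z == l).
have Pu : P u by rewrite /P connect0.
have Py : ~~ P y by rewrite /P negb_or Ny.
have [a [b [rab /orP[Ca|/eqP al] /norP[Nb bl]]]] := connect_exit (cr u y) Pu Py.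
  have aA : a \in predC1 l by apply: connect_induced_mem Ca; rewrite inE.
  apply: (negP Nb); apply: (connect_trans Ca (connect1 _)).
  by rewrite /induced aA inE bl.
by rewrite al in rab; rewrite (leaf b rab) connect0 in Nb.
Qed.

Lemma connect_induced_last r (B : {pred T}) u v : u != v -> u \in B ->
  connect (induced r B) u v ->
  exists x, r x v /\ connect (induced r [predD1 B & v]) u x.
Proof.
move=> uv uB Cuv; have uA : u \in [predD1 B & v] by rewrite inE uv.
have Nv : ~~ connect (induced r [predD1 B & v]) u v.
  by apply/negP => /(connect_induced_mem uA); rewrite inE eqxx.
have [a [b [/and3P[_ bB rab] Ca Nb]]] := connect_exit Cuv (connect0 _ u) Nv.
exists a; split => //; case: (eqVneq b v) => [<- //|bv].
case/negP: Nb; apply: (connect_trans Ca (connect1 _)).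
by rewrite /induced (connect_induced_mem uA Ca) inE bv bB.
Qed.

Lemma next_next_neq c x : uniq c -> 2 < size c -> x \in c -> next c (next c x) != x.
Proof.
move=> Uc Sc cx; have [i t rot_c] := rot_to cx.
rewrite -!(next_rot i Uc) rot_c.
have : uniq (x :: t) by rewrite -rot_c rot_uniq.
have : 2 < size (x :: t) by rewrite -rot_c size_rot.
case: t {rot_c} => [|y [|z t]] //= _.
rewrite !inE !negb_or => /andP[/and3P[xy xz _] /andP[/andP[yz _] _]].
by rewrite eqxx (eq_sym y x) (negbTE xy) eqxx eq_sym.
Qed.

Lemma next_neq c x : uniq c -> 2 < size c -> x \in c -> next c x != x.
Proof.
move=> Uc Sc cx; apply: contraNneq (next_next_neq Uc Sc cx) => E.
by rewrite !E.
Qed.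

Lemma next_edge_inj c : uniq c -> 2 < size c ->
  {in c &, forall p x, [set p; next c p] = [set x; next c x] -> p = x}.
Proof.
move=> Uc Sc p x _ cx /eq_set2[[]//|[px pnx]].
by move: (next_next_neq Uc Sc cx); rewrite -px pnx eqxx.
Qed.

Lemma mem_cycle_edges c x : x \in c -> [set x; next c x] \in cycle_edges c.
Proof. by move=> cx; apply/imsetP; exists x. Qed.

Lemma cycle_edge_mem c a b : [set a; b] \in cycle_edges c -> a \in c /\ b \in c.
Proof. by case/imsetP=> x cx /eq_set2[][-> ->]; rewrite mem_next. Qed.

Lemma cycle_edge_rel r c a b : symmetric r -> cycle r c ->
  [set a; b] \in cycle_edges c -> r a b.
Proof.
move=> sr Cc /imsetP[x cx /eq_set2[][-> ->]]; last rewrite sr;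
  exact: next_cycle Cc cx.
Qed.

Lemma cycle_edge_neq c a b : uniq c -> 2 < size c ->
  [set a; b] \in cycle_edges c -> a != b.
Proof.
move=> Uc Sc /imsetP[x cx /eq_set2[][-> ->]]; first rewrite eq_sym;
  exact: next_neq.
Qed.

Lemma leaf_notin_cycle r c z t : symmetric r -> is_cycle r c ->
  (forall y, r z y -> y = t) -> z \notin c.
Proof.
move=> sr /and3P[Uc Sc Cc] leaf; apply/negP => zc.
have zn : next c z = t by apply/leaf/(next_cycle Cc).
have zp : prev c z = t by apply: leaf; rewrite sr; apply: prev_cycle.
by move: (next_next_neq Uc Sc zc); rewrite zn -zp next_prev ?eqxx.
Qed.

Lemma sub_in_is_cycle r r' c : {in c &, subrel r r'} -> is_cycle r c -> is_cycle r' c.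
Proof.
move=> sub /and3P[Uc Sc Cc]; rewrite /is_cycle Uc Sc.
by apply: cycle_from_next => // x cx; rewrite sub ?mem_next ?(next_cycle Cc).
Qed.

Lemma is_cycle_del_edge r c x y : is_cycle r c ->
  [set x; y] \notin cycle_edges c -> is_cycle (del_edge r x y) c.
Proof.
move=> /and3P[Uc Sc Cc] Nxy; rewrite /is_cycle Uc Sc.
apply: cycle_from_next => // p pc; rewrite /del_edge (next_cycle Cc) // edge_isE.
by apply: contraNneq Nxy => <-; apply: mem_cycle_edges.
Qed.

Lemma connect_next_around c x : uniq c -> x \in c ->
  connect (fun p q => [&& p \in c, p != x & q == next c p]) (next c x) x.
Proof.
move=> Uc cx; have [i t rot_c] := rot_to cx.
have Ut : uniq (x :: t) by rewrite -rot_c rot_uniq.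
have E : (fun p q => [&& p \in c, p != x & q == next c p]) =2
         (fun p q => [&& p \in x :: t, p != x & q == next (x :: t) p]).
  by move=> p q; rewrite -rot_c mem_rot (next_rot i Uc).
rewrite (eq_connect E) -(next_rot i Uc) rot_c {E rot_c}.
case: t Ut => [|y t] Ut; first by rewrite /next /= eqxx.
have -> : next (x :: y :: t) x = y by rewrite /next /= eqxx.
have /andP[_] : frel (next (x :: y :: t)) x y && fpath (next (x :: y :: t)) y (rcons t x).
  exact: cycle_next Ut.
have xt : {in y :: t, forall p, p != x}.
  by move: Ut => /andP[xt _] p pt; apply: contraNneq xt => <-.
rewrite rcons_path => /andP[Pt /eqP Nlast].
apply/connectP; exists (rcons t x); last by rewrite last_rcons.
rewrite rcons_path Nlast eqxx xt ?mem_last // in_cons mem_last orbT !andbT.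
apply: (sub_in_path (P := [in y :: t])) (allss _) Pt => p q pt _ /eqP <-.
by rewrite in_cons pt orbT xt ?eqxx.
Qed.

Lemma connect_cycle_detour s c a b : symmetric s -> uniq c -> 2 < size c ->
  [set a; b] \in cycle_edges c ->
  {in c, forall p, [set p; next c p] != [set a; b] -> connect s p (next c p)} ->
  connect s a b.
Proof.
move=> ss Uc Sc /imsetP[x cx Eab] detour; apply: (connect_set2 ss Eab).
rewrite sym_connect_sym //; apply: (connect_sub _ (connect_next_around Uc cx)).
move=> p _ /and3P[pc px /eqP->]; apply: (detour _ pc); rewrite Eab.
by apply: contra px => /eqP/(next_edge_inj Uc Sc pc cx)->.
Qed.

Lemma cycle_of_detour r x y : symmetric r -> r x y -> x != y ->
  connect (del_edge r x y) x y ->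
  exists c, is_cycle r c /\ [set x; y] \in cycle_edges c.
Proof.
move=> sr rxy xy /connectP[p0 p0P y_last].
case: (shortenP p0P) y_last => p pP Up _ {p0 p0P} y_last.
have size_p : 1 < size p.
  case: p pP Up y_last => [|z [|z' p]] //= => [_ _ yx|/andP[/andP[_ +] _] _ yz].
    by rewrite yx eqxx in xy.
  by rewrite yz /edge_is !eqxx.
exists (x :: p); split.
  rewrite /is_cycle Up ltnS size_p /cycle rcons_path -y_last sr rxy andbT.
  by apply: sub_path pP => a b /andP[].
apply/imsetP; exists y; first by rewrite y_last mem_last.
by rewrite y_last next_nth mem_last index_last // nth_default // setUC.
Qed.

Lemma not_on_cycle_bridge r x y : symmetric r -> r x y -> x != y ->
  ~ on_cycle r x -> ~~ connect (del_edge r x y) x y.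
Proof.
move=> sr rxy xy Nx; apply/negP => /(cycle_of_detour sr rxy xy)[c [Hc xy_c]].
by apply: Nx; exists c; split; last exact: (cycle_edge_mem xy_c).1.
Qed.

Lemma cycle_avoiding_edge r c c' x y a b : symmetric r ->
  is_cycle r c -> is_cycle r c' -> [set x; y] \in cycle_edges c' ->
  [set a; b] \in cycle_edges c -> [set a; b] \notin cycle_edges c' ->
  exists c3, is_cycle (del_edge r x y) c3.
Proof.
move=> sr /and3P[Uc Sc Cc] /and3P[Uc' Sc' Cc'] xy_c' ab_c ab_c'.
have sr' := del_edge_sym x y sr.
have ss := del_edge_sym a b sr'.
have keep_edge p z : [set p; z] != [set x; y] -> [set p; z] != [set a; b] -> r p z ->
    del_edge (del_edge r x y) a b p z.
  by move=> Nxy Nab rpz; rewrite /del_edge rpz !edge_isE Nxy Nab.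
have Cxy : connect (del_edge (del_edge r x y) a b) x y.
  apply: (connect_cycle_detour ss Uc' Sc' xy_c') => p pc' Nxy.
  apply/connect1/keep_edge => //.
    by apply: contraNneq ab_c' => <-; apply: mem_cycle_edges.
  exact: next_cycle Cc' pc'.
(* Walk around c avoiding ab, replacing the edge xy, if met, by the detour Cxy. *)
have Cab : connect (del_edge (del_edge r x y) a b) a b.
  apply: (connect_cycle_detour ss Uc Sc ab_c) => p pc Nab.
  have [/eqP Exy|Nxy] := boolP ([set p; next c p] == [set x; y]).
    exact: connect_set2 ss Exy Cxy.
  by apply/connect1/keep_edge => //; apply: next_cycle Cc pc.
have rab : del_edge r x y a b.
  rewrite /del_edge (cycle_edge_rel sr Cc ab_c) edge_isE.
  by apply: contraNneq ab_c' => ->.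
have [c3 [Hc3 _]] := cycle_of_detour sr' rab (cycle_edge_neq Uc Sc ab_c) Cab.
by exists c3.
Qed.

Lemma deg1_neighbour r l u y : r l u -> deg r l = 1 -> r l y -> y = u.
Proof.
move=> rlu /eqP/cards1P[z Ez] rly.
have : u \in [set y | r l y] by rewrite inE.
have : y \in [set y | r l y] by rewrite inE.
by rewrite Ez !inE => /eqP-> /eqP->.
Qed.

Lemma deg2_neighbour r v x : 2 <= deg r v -> exists y, r v y /\ y != x.
Proof.
move=> dv; have [y /andP[rvy yx]|none] := pickP [pred y | r v y && (y != x)].
  by exists y.
have : [set y | r v y] \subset [set x].
  by apply/subsetP => y; rewrite !inE => rvy; move: (none y); rewrite /= rvy => /negbFE.
by move/subset_leq_card; rewrite cards1 => /(leq_trans dv).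
Qed.

End Graphs.

Section TwoSwitch.
Variables (T : finType) (e : rel T) (l u v w : T).
Hypotheses (se : symmetric e) (ie : irreflexive e).
Hypotheses (leaf : forall y, e l y -> y = u) (elu : e l u).
Hypothesis inter : interchangeable e l u v w.

Local Notation e' := (two_switch e l u v w).

Let evw : e v w. Proof. by case/and3P: inter. Qed.
Let lv : l != v. Proof. by case/and5P: inter. Qed.
Let lw : l != w. Proof. by case/and5P: inter. Qed.
Let uv : u != v. Proof. by case/and5P: inter => _ _ _ _ /and4P[]. Qed.
Let uw : u != w. Proof. by case/and5P: inter => _ _ _ _ /and4P[]. Qed.
Let nuw : ~~ e u w. Proof. by case/and5P: inter => _ _ _ _ /and4P[]. Qed.
Let lu : l != u. Proof. by apply: contraTneq elu => ->; rewrite ie. Qed.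

Lemma two_switchE a b : e' a b =
  (e a b && ~~ edge_is a b l u && ~~ edge_is a b v w)
  || edge_is a b l v || edge_is a b u w.
Proof. by rewrite /two_switch inter. Qed.

Lemma two_switch_sym : symmetric e'.
Proof.
by move=> a b; rewrite !two_switchE se !edge_isE ![[set b; a]]setUC.
Qed.

Lemma two_switch_lv : e' l v.
Proof. by rewrite two_switchE /edge_is !eqxx !orbT. Qed.

Lemma two_switch_uw : e' u w.
Proof. by rewrite two_switchE /edge_is !eqxx !orbT. Qed.

Lemma two_switch_vw : ~~ e' v w.
Proof.
rewrite two_switchE /edge_is !eqxx andbF /= eq_sym (negbTE lv) (eq_sym w l).
by rewrite (negbTE lw) (eq_sym v u) (negbTE uv) (eq_sym w u) (negbTE uw) !andbF.
Qed.

Lemma two_switch_leaf y : e' l y -> y = v.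
Proof.
rewrite two_switchE /edge_is !eqxx (negbTE lv) (negbTE lu) (negbTE lw) /=.
by rewrite !orbF; case/orP=> [/andP[/andP[/leaf-> ]]|/eqP //]; rewrite eqxx.
Qed.

Lemma two_switch_of_edge a b :
  e a b -> ~~ edge_is a b l u -> ~~ edge_is a b v w -> e' a b.
Proof. by move=> eab Nlu Nvw; rewrite two_switchE eab Nlu Nvw. Qed.

Lemma edge_of_two_switch a b : a != l -> b != l ->
  del_edge e' u w a b -> del_edge e v w a b.
Proof.
move=> al bl /andP[]; rewrite two_switchE (edge_isNl v al bl) orbF.
by case/orP=> [/andP[/andP[eab _] Nvw] _|->] //; rewrite /del_edge eab Nvw.
Qed.

Lemma l_notin_two_switch_cycle c : is_cycle e' c -> l \notin c.
Proof.
by move/leaf_notin_cycle; apply; [apply: two_switch_sym|apply: two_switch_leaf].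
Qed.

Lemma is_cycle_of_two_switch c : is_cycle (del_edge e' u w) c -> is_cycle e c.
Proof.
move=> Hc; have lc : l \notin c.
  by apply: l_notin_two_switch_cycle; apply: (sub_in_is_cycle _ Hc) => a b _ _ /andP[].
apply: (sub_in_is_cycle _ Hc) => a b ac bc /edge_of_two_switch /andP[] //.
  by apply: contraNneq lc => <-.
by apply: contraNneq lc => <-.
Qed.

Lemma connected_two_switch : connected_graph e ->
  connect e' l u -> connect e' v w -> connected_graph e'.
Proof.
move=> cg Clu Cvw a b; apply: (connect_sub _ (cg a b)) => x y exy.
have [Exy|Nxy] := boolP (edge_is x y l u).
  by apply: connect_set2 two_switch_sym _ Clu; apply/eqP; rewrite -edge_isE.
have [Exy|Nvw] := boolP (edge_is x y v w).
  by apply: connect_set2 two_switch_sym _ Cvw; apply/eqP; rewrite -edge_isE.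
exact/connect1/two_switch_of_edge.
Qed.

Hypothesis cg : connected_graph e.
Hypothesis unique_cycle : forall c1 c2, is_cycle e c1 -> is_cycle e c2 ->
  cycle_edges c1 = cycle_edges c2.

Lemma two_switch_no_cycle_avoiding_uw c1 c : is_cycle e c1 ->
  [set v; w] \in cycle_edges c1 -> ~ is_cycle (del_edge e' u w) c.
Proof.
move=> Hc1 vw_c1 Hc; have /and3P[_ _ Cc] := Hc.
have := vw_c1; rewrite -(unique_cycle (is_cycle_of_two_switch Hc) Hc1).
move/(cycle_edge_rel (del_edge_sym u w two_switch_sym) Cc)/andP.
by rewrite (negbTE two_switch_vw); case.
Qed.

Lemma unicyclic_two_switch_on_cycle c1 : is_cycle e c1 ->
  [set v; w] \in cycle_edges c1 -> u \notin c1 -> unicyclic e'.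
Proof.
move=> Hc1 vw_c1 uc1; have /and3P[Uc1 Sc1 Cc1] := Hc1.
have lc1 := leaf_notin_cycle se Hc1 leaf.
have sr' := del_edge_sym u w two_switch_sym.
have Cvw : connect (del_edge e' u w) v w.
  apply: (connect_cycle_detour sr' Uc1 Sc1 vw_c1) => p pc Np; apply: connect1.
  have npc : next c1 p \in c1 by rewrite mem_next.
  have [pl npl] := (memPn lc1 _ pc, memPn lc1 _ npc).
  have [pu npu] := (memPn uc1 _ pc, memPn uc1 _ npc).
  rewrite /del_edge (edge_isNl w pu npu) andbT two_switch_of_edge //.
  - exact: next_cycle Cc1 pc.
  - by rewrite edge_isNl.
  - by rewrite edge_isE.
have Cuv : connect (del_edge e' u w) u v.
  have [ul vl] : u != l /\ v != l by rewrite !(eq_sym _ l).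
  apply: (connect_sub _ (connect_avoid_leaf cg leaf ul vl)).
  move=> a b /and3P[]; rewrite !inE => al bl eab.
  have [Evw|Nvw] := boolP (edge_is a b v w).
    by apply: connect_set2 sr' _ Cvw; apply/eqP; rewrite -edge_isE.
  apply/connect1/andP; split; first by apply: two_switch_of_edge; rewrite // edge_isNl.
  by apply: contra nuw => Euw; rewrite -(edge_is_rel se Euw).
have [c2 [Hc2 _]] :=
  cycle_of_detour two_switch_sym two_switch_uw uw (connect_trans Cuv Cvw).
have no_cycle_avoiding := two_switch_no_cycle_avoiding_uw Hc1 vw_c1.
have uw_in c : is_cycle e' c -> [set u; w] \in cycle_edges c.
  move=> Hc; apply/negPn/negP => N; exact: no_cycle_avoiding (is_cycle_del_edge Hc N).
have sub_edges c c' : is_cycle e' c -> is_cycle e' c' ->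
    cycle_edges c \subset cycle_edges c'.
  move=> Hc Hc'; apply/subsetP => _ /imsetP[a ac ->]; apply/negPn/negP => N.
  have [c3] :=
    cycle_avoiding_edge two_switch_sym Hc Hc' (uw_in _ Hc') (mem_cycle_edges ac) N.
  exact: no_cycle_avoiding.
split; last 2 first.
- by exists c2.
- by move=> c c' Hc Hc'; apply/eqP; rewrite eqEsubset !sub_edges.
apply: connected_two_switch cg _ (connect_del_edge Cvw).
apply: (connect_trans (connect1 two_switch_lv)).
by rewrite (sym_connect_sym two_switch_sym) (connect_del_edge Cuv).
Qed.

Lemma unicyclic_two_switch_off_cycle c0 : is_cycle e c0 -> v \notin c0 ->
  connect (del_edge (induced e (predC1 l)) v w) u v ->
  ~~ connect (del_edge e v w) u w -> unicyclic e'.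
Proof.
move=> Hc0 vc0 Cuv Nuw.
have Cvu : connect e' v u.
  rewrite (sym_connect_sym two_switch_sym).
  apply: (connect_sub _ Cuv) => a b /andP[/and3P[]]; rewrite !inE => al bl eab Nvw.
  by apply/connect1/two_switch_of_edge; rewrite // edge_isNl.
have avoid_uw c : is_cycle e' c -> [set u; w] \notin cycle_edges c.
  move=> Hc; apply/negP => uw_c; apply: (negP Nuw).
  have /and3P[Uc Sc Cc] := Hc; have lc := l_notin_two_switch_cycle Hc.
  apply: (connect_cycle_detour (del_edge_sym v w se) Uc Sc uw_c) => p pc Np.
  apply/connect1/edge_of_two_switch; rewrite ?(memPn lc) ?mem_next //.
  by rewrite /del_edge (next_cycle Cc pc) edge_isE.
have lc0 := leaf_notin_cycle se Hc0 leaf.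
split.
- apply: connected_two_switch cg (connect_trans (connect1 two_switch_lv) Cvu) _.
  exact: connect_trans Cvu (connect1 two_switch_uw).
- exists c0; apply: (sub_in_is_cycle _ Hc0) => a b ac bc eab.
  by apply: two_switch_of_edge; rewrite // edge_isNl // ?(memPn lc0) ?(memPn vc0).
- move=> c c' Hc Hc'.
  by apply: unique_cycle; apply/is_cycle_of_two_switch/is_cycle_del_edge/avoid_uw.
Qed.

End TwoSwitch.

Section USwitches.
Variables (T : finType) (e : rel T) (l u : T).
Hypotheses (se : symmetric e) (ie : irreflexive e) (cg : connected_graph e).
Hypothesis unique_cycle : forall c1 c2, is_cycle e c1 -> is_cycle e c2 ->
  cycle_edges c1 = cycle_edges c2.
Hypotheses (leaf : forall y, e l y -> y = u) (elu : e l u) (ncu : ~ on_cycle e u).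

Lemma cycle_neighbour_nonadjacent c v : is_cycle e c -> v \in c ->
  exists w, [/\ e v w, [set v; w] \in cycle_edges c & ~~ e u w].
Proof.
move=> Hc vc; have /and3P[Uc Sc Cc] := Hc.
have [Nun|/negbNE eun] := boolP (~~ e u (next c v)).
  by exists (next c v); rewrite (next_cycle Cc vc) mem_cycle_edges.
exists (prev c v); split.
- by rewrite se (prev_cycle Cc vc).
- by rewrite setUC -{2}(next_prev Uc v) mem_cycle_edges ?mem_prev.
apply/negP => eup; apply: ncu; exists [:: u; next c v; v; prev c v].
split; last by rewrite inE eqxx.
have uc : u \notin c by apply/negP => uc; apply: ncu; exists c.
have pv : prev c v != v.
  by rewrite -{2}(next_prev Uc v) eq_sym next_neq ?mem_prev.
have nv := next_neq Uc Sc vc.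
have np : next c v != prev c v.
  by apply: contraNneq (next_next_neq Uc Sc vc) => ->; rewrite next_prev.
rewrite /is_cycle /= !inE !negb_or nv np (eq_sym v) pv eun.
rewrite !(eq_sym u) !(memPn uc) ?mem_next ?mem_prev //.
rewrite [e (next c v) v]se [e v (prev c v)]se [e (prev c v) u]se eup.
by rewrite (next_cycle Cc vc) (prev_cycle Cc vc).
Qed.

Lemma u_switch_on_cycle v : on_cycle e v ->
  exists a b c d, u_switch e a b c d /\ two_switch e a b c d l v.
Proof.
case=> c1 [Hc1 vc1].
have [w [evw vw_c1 nuw]] := cycle_neighbour_nonadjacent Hc1 vc1.
have uc1 : u \notin c1 by apply/negP => uc1; apply: ncu; exists c1.
have lc1 := leaf_notin_cycle se Hc1 leaf.
have wc1 := (cycle_edge_mem vw_c1).2.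
have inter : interchangeable e l u v w.
  rewrite /interchangeable elu evw nuw !(eq_sym l) !(eq_sym u) !(memPn lc1) //.
  rewrite !(memPn uc1) // andbT; apply/negP => /leaf vu.
  by rewrite -vu vc1 in uc1.
exists l, u, v, w; split; last exact: two_switch_lv inter.
split => //.
exact: (unicyclic_two_switch_on_cycle se ie leaf elu inter cg unique_cycle Hc1 vw_c1 uc1).
Qed.

Hypothesis has_cycle : exists c, is_cycle e c.

Lemma u_switch_off_cycle v : ~ on_cycle e v -> v <> u -> 2 <= deg e v ->
  exists a b c d, u_switch e a b c d /\ two_switch e a b c d l v.
Proof.
move=> ncv /eqP vu dv; have uv : u != v by rewrite eq_sym.
have vl : v != l.
  have [y [evy yu]] := deg2_neighbour u dv.
  by apply: contraNneq yu => vl; rewrite vl in evy; rewrite (leaf evy).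
have ul : u != l by apply: contraTneq elu => ->; rewrite ie.
have [x [exv Cux]] :=
  connect_induced_last uv ul (connect_avoid_leaf cg leaf ul vl).
have xA : x \in [predD1 predC1 l & v].
  by apply: connect_induced_mem Cux; rewrite !inE uv ul.
have [w [evw wx]] := deg2_neighbour x dv.
have vw : v != w by apply: contraTneq evw => <-; rewrite ie.
have Huv : connect (del_edge (induced e (predC1 l)) v w) u v.
  apply: (connect_trans (connect_sub _ Cux) (connect1 _)).
    move=> a b /and3P[]; rewrite !inE => /andP[av al] /andP[bv bl] eab.
    by apply: connect1; rewrite /del_edge /induced !inE al bl eab edge_isNl.
  move: xA; rewrite !inE => /andP[xv xl].
  rewrite /del_edge /induced !inE xl vl exv /edge_is (negbTE xv).
  by rewrite [x == w]eq_sym (negbTE wx).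
have Nuw : ~~ connect (del_edge e v w) u w.
  apply: contra (not_on_cycle_bridge se evw vw ncv) => Cuw.
  apply: (connect_trans _ Cuw); rewrite sym_connect_sym; last exact: del_edge_sym.
  by apply: (connect_sub _ Huv) => a b /andP[/and3P[_ _ eab] Nvw]; apply/connect1/andP.
have uw : u != w by apply: contraNneq Nuw => <-; apply: connect0.
have nuw : ~~ e u w.
  apply: contra Nuw => euw; apply/connect1/andP; split => //.
  by rewrite /edge_is eq_sym (negbTE vu) (negbTE uw).
have inter : interchangeable e l u v w.
  rewrite /interchangeable elu evw nuw (eq_sym l) vl (eq_sym u) vu uw andbT /=.
  apply/andP; split; last by apply/negP => /leaf; apply/eqP.
  by apply: contraTneq evw => <-; apply/negP; rewrite se => /leaf; apply/eqP.
exists l, u, v, w; split; last exact: (two_switch_lv inter).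
split => //; have [c0 Hc0] := has_cycle.
apply: (unicyclic_two_switch_off_cycle se ie leaf elu inter cg unique_cycle
          Hc0 _ Huv Nuw).
by apply/negP => vc0; apply: ncv; exists c0.
Qed.

End USwitches.

Theorem lemma3p1 (T : finType) (e : rel T) (l u : T) :
  simple_graph e -> unicyclic e ->
  e l u -> deg e l = 1 -> ~ on_cycle e u ->
  (forall v : T, on_cycle e v ->
     exists a b c d : T, u_switch e a b c d /\ two_switch e a b c d l v) /\
  (forall v : T, ~ on_cycle e v -> v <> u -> 2 <= deg e v ->
     exists a b c d : T, u_switch e a b c d /\ two_switch e a b c d l v).
Proof.
move=> [se ie] [cg has_cycle unique_cycle] elu dl ncu.
have leaf y : e l y -> y = u := deg1_neighbour elu dl.
split=> v.
- exact: (u_switch_on_cycle se ie cg unique_cycle leaf elu ncu).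
- exact: (u_switch_off_cycle se ie cg unique_cycle leaf elu has_cycle).
Qed.
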